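(* Let $\mathcal{S}(\vec{x},\vec{a})$ be a specification over $\vec{a}$, where $\vec{x}$ and $\vec{a}$ are disjoint lists of Boolean variables. Let $\alpha$ be any assignment of the variables $\vec{x}$. Then $\alpha$ can be extended to an assignment $\beta$ of $\vec{x},\vec{a}$ such that (1) $\beta$ satisfies $\mathcal{S}$, and (2) $\alpha(x)=\beta(x)$ for every $x\in\vec{x}$.
   Context: A literal over a Boolean variable $x$ is $x$ or $\bar{x}=1-x$. A pseudo-Boolean (PB) constraint is $C\doteq\sum_i a_i\ell_i\ge A$ with integer $a_i,A$ and literals $\ell_i$; its negation is $\neg C\doteq\sum_i a_i\bar{\ell}_i\ge \sum_i a_i-A+1$. A formula is a finite set (conjunction) of PB constraints. A substitution (witness) $\omega$ maps variables to $0$, $1$ or literals, extended by $\omega(\bar x)=\overline{\omega(x)}$, $\omega(0)=0$, $\omega(1)=1$; its support is $\mathrm{supp}(\omega)=\{x:\omega(x)\ne x\}$. $C{\upharpoonright}_\omega\doteq\sum_i a_i\omega(\ell_i)\ge A$, and $F{\upharpoonright}_\omega=\{C{\upharpoonright}_\omega : C\in F\}$. For formulas $F,G$, $F\vdash G$ means every constraint of $G$ can be derived from $F$ in the cutting planes proof system (a sound system, so every assignment satisfying $F$ satisfies $G$). A formula $\mathcal{S}(\vec x,\vec a)=\{C_1,\dots,C_n\}$ is a specification over $\vec a$ if there are substitutions $\omega_1,\dots,\omega_n$ with $\mathrm{supp}(\omega_i)\subseteq\vec a$ for all $i$ such that for each $i\in\{1,\dots,n\}$: $\{C_1,\dots,C_{i-1}\}\cup\{\neg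 C_i\}\vdash\{C_1{\upharpoonright}_{\omega_i},\dots,C_i{\upharpoonright}_{\omega_i}\}$ (for $i=1$ the left-hand side is just $\{\neg C_1\}$). *)

From Stdlib Require Import ZArith List Permutation.
Import ListNotations.
Open Scope Z_scope.

Set Implicit Arguments.

Section PB.
Variable V : Type.

Inductive lit : Type := Pos (v : V) | Neg (v : V).

Definition lit_var (l : lit) : V := match l with Pos v => v | Neg v => v end.
Definition lit_neg (l : lit) : lit := match l with Pos v => Neg v | Neg v => Pos v end.

(** A PB constraint  sum_i a_i l_i >= A  (integer coefficients, any sign). *)
Record pbc : Type := PBC { pb_terms : list (Z * lit); pb_deg : Z }.

Definition pbc_default : pbc := PBC [] 0.

Definition lit_val (beta : V -> bool) (l : lit) : Z :=
  match l with
  | Pos v => if beta v then 1 else 0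
  | Neg v => if beta v then 0 else 1
  end.

Definition lhs_val (beta : V -> bool) (ts : list (Z * lit)) : Z :=
  fold_right (fun t acc => fst t * lit_val beta (snd t) + acc) 0 ts.

Definition sat (beta : V -> bool) (C : pbc) : Prop :=
  lhs_val beta (pb_terms C) >= pb_deg C.

Definition coef_sum (ts : list (Z * lit)) : Z :=
  fold_right (fun t acc => fst t + acc) 0 ts.

Definition pb_neg (C : pbc) : pbc :=
  PBC (map (fun t => (fst t, lit_neg (snd t))) (pb_terms C))
      (coef_sum (pb_terms C) - pb_deg C + 1).

(** Ceiling of a / c for c > 0. *)
Definition zceil (a c : Z) : Z := - ((- a) / c).

Inductive norm_step : pbc -> pbc -> Prop :=
| NS_perm ts ts' A : Permutation ts ts' -> norm_step (PBC ts A) (PBC ts' A)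
| NS_merge a b l ts A :
    norm_step (PBC ((a, l) :: (b, l) :: ts) A) (PBC ((a + b, l) :: ts) A)
| NS_cancel a b l ts A :
    norm_step (PBC ((a, l) :: (b, lit_neg l) :: ts) A) (PBC ((a - b, l) :: ts) (A - b))
| NS_drop0 l ts A : norm_step (PBC ((0, l) :: ts) A) (PBC ts A).

Inductive cp_derivable (F : list pbc) : pbc -> Prop :=
| CP_axiom C : In C F -> cp_derivable F C
| CP_lit l : cp_derivable F (PBC [(1, l)] 0)
| CP_add C1 C2 :
    cp_derivable F C1 -> cp_derivable F C2 ->
    cp_derivable F (PBC (pb_terms C1 ++ pb_terms C2) (pb_deg C1 + pb_deg C2))
| CP_mul c C : 0 < c -> cp_derivable F C ->
    cp_derivable F (PBC (map (fun t => (c * fst t, snd t)) (pb_terms C)) (c * pb_deg C))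
| CP_div c C : 0 < c -> cp_derivable F C ->
    cp_derivable F (PBC (map (fun t => (zceil (fst t) c, snd t)) (pb_terms C))
                        (zceil (pb_deg C) c))
| CP_sat C : 0 <= pb_deg C -> (forall t, In t (pb_terms C) -> 0 <= fst t) ->
    cp_derivable F C ->
    cp_derivable F (PBC (map (fun t => (Z.min (fst t) (pb_deg C), snd t)) (pb_terms C))
                        (pb_deg C))
| CP_norm C C' : cp_derivable F C -> norm_step C C' -> cp_derivable F C'.

Definition derives (F G : list pbc) : Prop :=
  forall C, In C G -> cp_derivable F C.

Inductive sval : Type := SConst (b : bool) | SLit (l : lit).

Definition subst := V -> sval.

Definition sval_neg (s : sval) : sval :=
  match s with SConst b => SConst (negb b) | SLit l => SLit (lit_neg l) end.

Definition subst_lit (w : subst) (l : lit) : sval :=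
  match l with Pos v => w v | Neg v => sval_neg (w v) end.

Definition supp_in (w : subst) (as_ : list V) : Prop :=
  forall v, w v <> SLit (Pos v) -> In v as_.

(** C restricted by w:  sum a_i w(l_i) >= A, constants moved to the degree. *)
Definition restrict_terms (w : subst) (ts : list (Z * lit)) : list (Z * lit) :=
  flat_map (fun t => match subst_lit w (snd t) with
                     | SLit l' => [(fst t, l')]
                     | SConst _ => []
                     end) ts.

Definition restrict_const (w : subst) (ts : list (Z * lit)) : Z :=
  fold_right (fun t acc => match subst_lit w (snd t) with
                           | SConst true => fst t + acc
                           | _ => acc
                           end) 0 ts.

Definition restrict (w : subst) (C : pbc) : pbc :=
  PBC (restrict_terms w (pb_terms C)) (pb_deg C - restrict_const w (pb_terms C)).

(** S = [C_1; ...; C_n] is a specification over [as_] (0-indexed here):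
    witnesses w_i with supp(w_i) in as_ such that
    {C_1..C_(i-1)} u {not C_i} |- {C_1|w_i, ..., C_i|w_i}. *)
Definition is_specification (as_ : list V) (S : list pbc) : Prop :=
  exists ws : nat -> subst,
    (forall i, supp_in (ws i) as_) /\
    (forall i, (i < length S)%nat ->
       derives (firstn i S ++ [pb_neg (nth i S pbc_default)])
               (map (restrict (ws i)) (firstn (Datatypes.S i) S))).

End PB.

Arguments Pos {V} v.
Arguments Neg {V} v.
Arguments SConst {V} b.
Arguments SLit {V} l.

(** Cutting planes is sound, so whenever [beta] satisfies [C_1, ..., C_(i-1)]
    but falsifies [C_i], it satisfies [C_1, ..., C_(i-1), not C_i] and hence every
    [C_j] restricted by [omega_i] for [j <= i]; that is, the composed assignment
    [beta o omega_i] satisfies [C_1, ..., C_i].  As [omega_i] only moves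
    variables of [a], this repair leaves every other variable untouched.
    Starting from [alpha] and repairing constraint after constraint yields the
    required extension. *)

From Stdlib Require Import ZArith List Lia Permutation Classical.
Import ListNotations.
Open Scope Z_scope.

Lemma zceil_0 (c : Z) : zceil 0 c = 0.
Proof. destruct c; reflexivity. Qed.

Lemma zceil_le_mono (a b c : Z) : 0 < c -> b <= a -> zceil b c <= zceil a c.
Proof.
  intros Hc Hba; unfold zceil.
  enough ((- a) / c <= (- b) / c) by lia.
  apply Z.div_le_mono; lia.
Qed.

Lemma zceil_add_ge (a b c : Z) : 0 < c -> zceil (a + b) c <= zceil a c + zceil b c.
Proof.
  intros Hc; unfold zceil.
  pose proof (Z.div_mod (- a) c ltac:(lia)).
  pose proof (Z.div_mod (- b) c ltac:(lia)).
  pose proof (Z.div_mod (- (a + b)) c ltac:(lia)).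
  pose proof (Z.mod_pos_bound (- a) c Hc).
  pose proof (Z.mod_pos_bound (- b) c Hc).
  pose proof (Z.mod_pos_bound (- (a + b)) c Hc).
  nia.
Qed.

Lemma firstn_S_nth {A : Type} (d : A) {k : nat} {l : list A} :
  (k < length l)%nat -> firstn (S k) l = firstn k l ++ [nth k l d].
Proof.
  revert k; induction l as [|x l IH]; intros [|k] Hk; simpl in *; try lia; auto.
  rewrite IH by lia; reflexivity.
Qed.

Section PseudoBoolean.
Variable V : Type.
Implicit Types (beta : V -> bool) (l : lit V) (ts : list (Z * lit V))
               (C : pbc V) (F G : list (pbc V)) (w : subst V).

Definition sat_all beta F : Prop := forall C, In C F -> sat beta C.

Lemma lit_val_01 beta l : lit_val beta l = 0 \/ lit_val beta l = 1.
Proof. destruct l; simpl; destruct (beta v); auto. Qed.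

Lemma lit_val_neg beta l : lit_val beta (lit_neg l) = 1 - lit_val beta l.
Proof. destruct l; simpl; destruct (beta v); reflexivity. Qed.

Lemma lhs_val_app beta ts ts' :
  lhs_val beta (ts ++ ts') = lhs_val beta ts + lhs_val beta ts'.
Proof. induction ts; simpl; lia. Qed.

Lemma lhs_val_perm beta {ts ts'} :
  Permutation ts ts' -> lhs_val beta ts = lhs_val beta ts'.
Proof. induction 1; simpl; lia. Qed.

Lemma lhs_val_scale beta c ts :
  lhs_val beta (map (fun t => (c * fst t, snd t)) ts) = c * lhs_val beta ts.
Proof. induction ts; simpl; [lia | rewrite IHts; ring]. Qed.

Lemma lhs_val_neg beta ts :
  lhs_val beta (map (fun t => (fst t, lit_neg (snd t))) ts)
  = coef_sum ts - lhs_val beta ts.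
Proof. induction ts as [|[a l] ts IH]; simpl; [lia | rewrite IH, lit_val_neg; ring]. Qed.

Lemma lhs_val_ceil_div beta c ts : 0 < c ->
  zceil (lhs_val beta ts) c <= lhs_val beta (map (fun t => (zceil (fst t) c, snd t)) ts).
Proof.
  intros Hc; induction ts as [|[a l] ts IH]; simpl; [rewrite zceil_0; lia|].
  pose proof (zceil_add_ge (a * lit_val beta l) (lhs_val beta ts) c Hc).
  destruct (lit_val_01 beta l) as [E|E]; rewrite E in *.
  - rewrite Z.mul_0_r, zceil_0 in *; lia.
  - rewrite !Z.mul_1_r in *; lia.
Qed.

Lemma lhs_val_nonneg beta ts :
  (forall t, In t ts -> 0 <= fst t) -> 0 <= lhs_val beta ts.
Proof.
  induction ts as [|[a l] ts IH]; simpl; intros Hts; [lia|].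
  assert (0 <= a) by (apply (Hts (a, l)); auto).
  assert (0 <= lhs_val beta ts) by (apply IH; auto).
  destruct (lit_val_01 beta l) as [E|E]; rewrite E; lia.
Qed.

Lemma lhs_val_saturate beta A ts : 0 <= A -> (forall t, In t ts -> 0 <= fst t) ->
  Z.min (lhs_val beta ts) A <= lhs_val beta (map (fun t => (Z.min (fst t) A, snd t)) ts).
Proof.
  intros HA; induction ts as [|[a l] ts IH]; simpl; intros Hts; [lia|].
  assert (0 <= a) by (apply (Hts (a, l)); auto).
  assert (0 <= lhs_val beta ts) by (apply lhs_val_nonneg; auto).
  specialize (IH ltac:(auto)).
  destruct (lit_val_01 beta l) as [E|E]; rewrite E; lia.
Qed.

Lemma norm_step_sound beta {C C'} : norm_step C C' -> sat beta C -> sat beta C'.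
Proof.
  unfold sat; destruct 1; simpl.
  - rewrite (lhs_val_perm beta H); auto.
  - destruct (lit_val_01 beta l) as [E|E]; rewrite E; lia.
  - rewrite lit_val_neg; destruct (lit_val_01 beta l) as [E|E]; rewrite E; lia.
  - lia.
Qed.

Lemma cp_derivable_sound beta {F C} :
  cp_derivable F C -> sat_all beta F -> sat beta C.
Proof.
  intros HC HF; induction HC; unfold sat in *; simpl in *.
  - apply HF; auto.
  - destruct (lit_val_01 beta l) as [E|E]; rewrite E; lia.
  - rewrite lhs_val_app; lia.
  - rewrite lhs_val_scale; nia.
  - pose proof (lhs_val_ceil_div beta c (pb_terms C) H).
    pose proof (zceil_le_mono _ _ _ H (Z.ge_le _ _ IHHC)); lia.
  - pose proof (lhs_val_saturate beta _ _ H H0); lia.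
  - exact (norm_step_sound beta H IHHC).
Qed.

Lemma derives_sound beta {F G} : derives F G -> sat_all beta F -> sat_all beta G.
Proof. intros HFG HF C HC; exact (cp_derivable_sound beta (HFG C HC) HF). Qed.

Lemma sat_pb_neg beta C : ~ sat beta C -> sat beta (pb_neg C).
Proof. unfold sat; destruct C as [ts A]; simpl; rewrite lhs_val_neg; lia. Qed.

Definition lit_eval beta l : bool :=
  match l with Pos v => beta v | Neg v => negb (beta v) end.

Definition assign_subst beta w : V -> bool :=
  fun v => match w v with SConst b => b | SLit l => lit_eval beta l end.

Lemma lit_val_assign_subst beta w l :
  lit_val (assign_subst beta w) l =
  match subst_lit w l with
  | SConst b => if b then 1 else 0
  | SLit l' => lit_val beta l'
  end.
Proof.
  unfold assign_subst; destruct l; simpl; destruct (w v) as [b|[u|u]]; simpl;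
    try destruct b; try destruct (beta u); reflexivity.
Qed.

Lemma lhs_val_assign_subst beta w ts :
  lhs_val (assign_subst beta w) ts
  = lhs_val beta (restrict_terms w ts) + restrict_const w ts.
Proof.
  induction ts as [|[a l] ts IH]; simpl; [reflexivity|].
  unfold restrict_terms in *; simpl.
  rewrite lhs_val_app, IH, lit_val_assign_subst.
  destruct (subst_lit w l) as [[|]|l']; simpl; ring.
Qed.

Lemma sat_restrict beta w C : sat beta (restrict w C) -> sat (assign_subst beta w) C.
Proof. unfold sat, restrict; simpl; rewrite lhs_val_assign_subst; lia. Qed.

Lemma assign_subst_notin_supp beta {w as_ v} :
  supp_in w as_ -> ~ In v as_ -> assign_subst beta w v = beta v.
Proof.
  intros Hw Hv; unfold assign_subst.
  destruct (classic (w v = SLit (Pos v))) as [E|E].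
  - rewrite E; reflexivity.
  - contradiction (Hv (Hw v E)).
Qed.

Lemma specification_step {as_ cs w k} beta :
  (k < length cs)%nat -> supp_in w as_ ->
  derives (firstn k cs ++ [pb_neg (nth k cs (pbc_default V))])
          (map (restrict w) (firstn (S k) cs)) ->
  sat_all beta (firstn k cs) ->
  exists beta', sat_all beta' (firstn (S k) cs) /\
                (forall v, ~ In v as_ -> beta' v = beta v).
Proof.
  intros Hk Hw Hder Hbeta.
  rewrite (firstn_S_nth (pbc_default V) Hk) in *.
  destruct (classic (sat beta (nth k cs (pbc_default V)))) as [Hsat|Hunsat].
  - exists beta; split; [|reflexivity].
    intros C HC; apply in_app_or in HC as [HC|[<-|[]]]; auto.
  - exists (assign_subst beta w); split.
    + assert (Hneg : sat_all beta (firstn k cs ++ [pb_neg (nth k cs (pbc_default V))])).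
      { intros C HC; apply in_app_or in HC as [HC|[<-|[]]]; auto.
        apply sat_pb_neg; assumption. }
      intros C HC; apply sat_restrict.
      exact (derives_sound beta Hder Hneg _ (in_map _ _ _ HC)).
    + intros v Hv; exact (assign_subst_notin_supp beta Hw Hv).
Qed.

Lemma specification_extend {as_ cs} alpha :
  is_specification as_ cs ->
  exists beta, sat_all beta cs /\ (forall v, ~ In v as_ -> beta v = alpha v).
Proof.
  intros [ws [Hsupp Hder]].
  enough (Hprefix : forall k, (k <= length cs)%nat -> exists beta,
             sat_all beta (firstn k cs) /\ (forall v, ~ In v as_ -> beta v = alpha v)).
  { destruct (Hprefix (length cs) (le_n _)) as [beta Hbeta].
    rewrite firstn_all in Hbeta; eauto. }
  induction k as [|k IH]; intros Hk.
  - exists alpha; split; [intros C [] | reflexivity].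
  - destruct (IH ltac:(lia)) as [beta [Hsat Hagree]].
    destruct (specification_step beta (Hk : (k < length cs)%nat) (Hsupp k) (Hder k Hk) Hsat)
      as [beta' [Hsat' Hagree']].
    exists beta'; split; [assumption|].
    intros v Hv; rewrite Hagree', Hagree by assumption; reflexivity.
Qed.

End PseudoBoolean.

Theorem lemma1 (V : Type) (xs as_ : list V) (S : list (pbc V))
  (Hdisj : forall v, In v xs -> ~ In v as_)
  (Hvars : forall C, In C S -> forall t, In t (pb_terms C) ->
             In (lit_var (snd t)) xs \/ In (lit_var (snd t)) as_)
  (Hspec : is_specification as_ S)
  (alpha : V -> bool) :
  exists beta : V -> bool,
    (forall C, In C S -> sat beta C) /\
    (forall x, In x xs -> alpha x = beta x).
Proof.
  destruct (specification_extend V alpha Hspec) as [beta [Hsat Hagree]].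
  exists beta; split; [exact Hsat|].
  intros x Hx; symmetry; exact (Hagree x (Hdisj x Hx)).
Qed.
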